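(* Let $A\in\mathbb{R}^{m\times n}$ with $A\geq 0$ and $A^{\dagger}\geq 0$, and let $(U_k^{(i)},V_k^{(i)},E_k)_{k=1}^{p}$, $i=1,2$, be two proper weak regular multisplittings of $A$ (with the same weighting matrices $E_k$) such that $R(E_k)\subseteq R(A^{T})$ for each $k=1,\ldots,p$. If $V_k^{(2)}\geq V_k^{(1)}$ for each $k=1,\ldots,p$, then $\rho(H_1)\leq\rho(H_2)<1$, where $H_i=\sum_{k=1}^{p}E_k[U_k^{(i)}]^{\dagger}V_k^{(i)}$ for $i=1,2$.
   Context: $A^{\dagger}$ denotes the Moore–Penrose inverse, $\rho(\cdot)$ the spectral radius, $R(\cdot)$, $N(\cdot)$ range and null space; inequalities are entrywise. A splitting $A=U-V$ is proper if $R(U)=R(A)$ and $N(U)=N(A)$; a proper splitting is proper weak regular if $U^{\dagger}\geq 0$ and $U^{\dagger}V\geq 0$. A proper weak regular multisplitting of $A$ is a triplet $(U_k,V_k,E_k)_{k=1}^{p}$ where each $A=U_k-V_k$ is a proper weak regular splitting and each $E_k\geq 0$ is an $n\times n$ diagonal matrix with $\sum_{k=1}^{p}E_k=I_n$. *)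

From HB Require Import structures.
From mathcomp Require Import all_boot all_order all_algebra.
From mathcomp Require Import complex reals.
Set Implicit Arguments. Unset Strict Implicit. Unset Printing Implicit Defensive.
Import Order.TTheory GRing.Theory Num.Theory.
Local Open Scope ring_scope.

Section Defs.
Variable R : realType.

Definition mx_nonneg m n (A : 'M[R]_(m, n)) : Prop := forall i j, 0 <= A i j.

Definition mx_le m n (B C : 'M[R]_(m, n)) : Prop := forall i j, B i j <= C i j.

Definition is_MP_inverse m n (A : 'M[R]_(m, n)) (X : 'M[R]_(n, m)) : Prop :=
  [/\ A *m X *m A = A, X *m A *m X = X,
      (A *m X)^T = A *m X & (X *m A)^T = X *m A].

Definition in_range m n (A : 'M[R]_(m, n)) (y : 'cV[R]_m) : Prop :=
  exists x : 'cV[R]_n, y = A *m x.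

Definition in_null m n (A : 'M[R]_(m, n)) (x : 'cV[R]_n) : Prop := A *m x = 0.

Definition proper_splitting m n (A U V : 'M[R]_(m, n)) : Prop :=
  [/\ A = U - V,
      forall y, in_range U y <-> in_range A y
    & forall x, in_null U x <-> in_null A x].

Definition proper_weak_regular m n (A U V : 'M[R]_(m, n)) (Ud : 'M[R]_(n, m)) : Prop :=
  [/\ proper_splitting A U V, is_MP_inverse U Ud,
      mx_nonneg Ud & mx_nonneg (Ud *m V)].

Definition proper_weak_regular_multisplitting m n p (A : 'M[R]_(m, n))
    (U V : 'I_p -> 'M[R]_(m, n)) (Ud : 'I_p -> 'M[R]_(n, m))
    (E : 'I_p -> 'M[R]_n) : Prop :=
  [/\ forall k, proper_weak_regular A (U k) (V k) (Ud k),
      forall k, is_diag_mx (E k) /\ mx_nonneg (E k)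
    & \sum_(k < p) E k = 1%:M].

Definition char_roots n (M : 'M[R]_n) : seq R[i] :=
  sval (closed_field_poly_normal (char_poly (map_mx (fun x : R => (x%:C)%C) M))).

Definition spectral_radius n (M : 'M[R]_n) : R :=
  \big[Num.max/0]_(z <- char_roots M) complex.Re `|z|.

End Defs.

From HB Require Import structures.
From mathcomp Require Import all_boot all_order all_algebra.
From mathcomp Require Import complex reals.
From mathcomp Require Import lra.
Import Order.TTheory GRing.Theory Num.Theory.
Local Open Scope ring_scope.

(* Since the E_k sum to the identity and their ranges lie in R(A^T), A has
   full column rank, i.e. A^+ A = I.  For a proper weak regular splitting
   A = U - V this forces U^+ U = I, so U^+ V = I - U^+ A; as U^+ A >= 0 and
   U^+ V >= 0, both matrices are diagonal, and A = U diag(c) with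
   c_j = (U^+ A)_jj > 0.  If V1 <= V2 then U1 <= U2, and comparing the two
   factorisations of a positive entry of column j gives c2_j <= c1_j.  Hence
   H1 and H2 are diagonal, with diagonal entries convex combinations (weights
   (E_k)_jj) of the numbers 1 - c1_kj <= 1 - c2_kj in [0, 1), where ci_kj is
   c_j for the splitting A = U_k^(i) - V_k^(i), and the spectral radius of a
   diagonal matrix is the largest modulus of its diagonal entries. *)

Lemma Re_norm_realC (R : rcfType) (x : R) : complex.Re `|x%:C%C| = `|x|.
Proof. by rewrite normc_def /= expr0n /= addr0 sqrtr_sqr. Qed.

Section SpectralRadiusDiag.
Context {R : realType} {n : nat}.
Implicit Types M N : 'M[R]_n.

Lemma char_roots_diag M :
  is_diag_mx M -> char_roots M =i [seq (M i i)%:C%C | i : 'I_n].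
Proof.
move=> M_diag z; rewrite /char_roots; case: closed_field_poly_normal => r /=.
rewrite (monicP (char_poly_monic _)) scale1r char_poly_trig; last first.
  apply/is_diag_mx_is_trig/is_diag_mxP => i j ij.
  by rewrite mxE (is_diag_mxP M_diag).
move=> charM; rewrite -root_prod_XsubC -charM.
under eq_bigr do rewrite mxE.
rewrite -(big_map (fun i => (M i i)%:C%C) xpredT (fun a => 'X - a%:P)).
rewrite root_prod_XsubC; apply/mapP/mapP => -[i _ ->]; exists i;
  by rewrite ?mem_enum ?mem_index_enum ?mxE.
Qed.

Lemma spectral_radius_ge0 M : 0 <= spectral_radius M.
Proof. by rewrite /spectral_radius bigmax_idl le_max lexx. Qed.

Lemma diag_le_spectral_radius {M} i :
  is_diag_mx M -> `|M i i| <= spectral_radius M.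
Proof.
move=> M_diag; rewrite -Re_norm_realC.
apply: (le_bigmax_seq _ _ xpredT (fun z => complex.Re `|z|)) => //.
by rewrite char_roots_diag //; apply: map_f; rewrite mem_enum.
Qed.

Lemma spectral_radius_diag_lt M b :
  is_diag_mx M -> 0 < b -> (forall i, `|M i i| < b) -> spectral_radius M < b.
Proof.
move=> M_diag b_gt0 M_lt; rewrite /spectral_radius big_seq.
apply: bigmax_lt => // z; rewrite char_roots_diag // => /mapP[i _ ->].
by rewrite Re_norm_realC.
Qed.

Lemma spectral_radius_diag_le M N :
  is_diag_mx M -> is_diag_mx N -> (forall i, `|M i i| <= `|N i i|) ->
  spectral_radius M <= spectral_radius N.
Proof.
move=> M_diag N_diag MN; rewrite {1}/spectral_radius big_seq.
apply: bigmax_le => [|z]; first exact: spectral_radius_ge0.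
rewrite char_roots_diag // => /mapP[i _ ->]; rewrite Re_norm_realC.
exact: le_trans (MN i) (diag_le_spectral_radius i N_diag).
Qed.

End SpectralRadiusDiag.

Section DiagonalProducts.
Context {R : pzSemiRingType}.

Lemma mulmx_diagE m n (X : 'M[R]_(m, n)) (T : 'M[R]_n) i j :
  is_diag_mx T -> (X *m T) i j = X i j * T j j.
Proof.
move=> /is_diag_mxP T_diag; rewrite mxE (bigD1 j) //= big1 ?addr0 // => l lj.
by rewrite T_diag ?mulr0.
Qed.

Context {n p : nat} {E T : 'I_p -> 'M[R]_n}.
Hypothesis T_diag : forall k, is_diag_mx (T k).

Lemma sum_mulmx_diagE i j :
  (\sum_(k < p) E k *m T k) i j = \sum_(k < p) E k i j * T k j j.
Proof. by rewrite summxE; apply: eq_bigr => k _; rewrite mulmx_diagE. Qed.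

Lemma sum_mulmx_diag :
  (forall k, is_diag_mx (E k)) -> is_diag_mx (\sum_(k < p) E k *m T k).
Proof.
move=> E_diag; apply/is_diag_mxP => i j ij; rewrite sum_mulmx_diagE big1 // => k _.
by rewrite (is_diag_mxP (E_diag k)) ?mul0r.
Qed.

End DiagonalProducts.

Lemma convex_comb_lt (R : realDomainType) p (w t : 'I_p -> R) b :
  (forall k, 0 <= w k) -> \sum_(k < p) w k = 1 -> (forall k, t k < b) ->
  \sum_(k < p) w k * t k < b.
Proof.
move=> w_ge0 w_sum1 t_lt.
have [k0 w_k0_gt0] : exists k0, 0 < w k0.
  apply/existsP; apply: contra_neqT (oner_neq0 R) => /existsPn w_le0.
  by rewrite -w_sum1 big1 // => k _; apply/eqP; rewrite eq_le w_ge0 andbT leNgt.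
have -> : b = \sum_(k < p) w k * b by rewrite -mulr_suml w_sum1 mul1r.
rewrite (bigD1 k0) // [ltRHS](bigD1 k0) //=.
apply: ltr_leD; first by rewrite ltr_pM2l.
by apply: ler_sum => k _; rewrite ler_wpM2l // ltW.
Qed.

Lemma eq_mx_on_cV (R : pzSemiRingType) m n (X Y : 'M[R]_(m, n)) :
  (forall y : 'cV[R]_n, X *m y = Y *m y) -> X = Y.
Proof.
move=> XY; apply/matrixP => i j.
have := congr1 (fun M : 'cV[R]_m => M i ord0) (XY (delta_mx j ord0)).
by rewrite -!colE !mxE.
Qed.

Section MoorePenrose.
Context {R : realType} {m n : nat} {A : 'M[R]_(m, n)} {Ad : 'M[R]_(n, m)}.
Hypothesis A_MP : is_MP_inverse A Ad.

Lemma MP_proj_range_tr (x : 'cV[R]_m) : Ad *m A *m (A^T *m x) = A^T *m x.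
Proof.
by case: A_MP => AAdA _ _ AdA_sym; rewrite -AdA_sym mulmxA -trmx_mul mulmxA AAdA.
Qed.

Lemma MP_left_inverse_partition {p} {E : 'I_p -> 'M[R]_n} :
  \sum_(k < p) E k = 1%:M -> (forall k y, in_range (E k) y -> in_range A^T y) ->
  Ad *m A = 1%:M.
Proof.
move=> E_sum1 E_range; apply: eq_mx_on_cV => y; rewrite mul1mx.
have -> : y = \sum_(k < p) E k *m y by rewrite -mulmx_suml E_sum1 mul1mx.
rewrite mulmx_sumr; apply: eq_bigr => k _.
by have [x ->] := E_range k (E k *m y) (ex_intro _ y erefl); apply: MP_proj_range_tr.
Qed.

End MoorePenrose.

Lemma left_inverse_col_gt0 {R : realType} {m n} {A : 'M[R]_(m, n)}
    {Ad : 'M[R]_(n, m)} j :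
  Ad *m A = 1%:M -> mx_nonneg A -> exists i, 0 < A i j.
Proof.
move=> AdA A_ge0; apply/existsP; apply: contra_neqT (oner_neq0 R) => /existsPn A_le0.
have := congr1 (fun M : 'M[R]_n => M j j) AdA; rewrite !mxE eqxx mulr1n => <-.
rewrite big1 // => l _.
suff -> : A l j = 0 by rewrite mulr0.
by apply/eqP; rewrite eq_le A_ge0 andbT leNgt A_le0.
Qed.

Section ProperWeakRegularSplitting.
Context {R : realType} {m n : nat} {A U V : 'M[R]_(m, n)} {Ad Ud : 'M[R]_(n, m)}.
Hypotheses (A_ge0 : mx_nonneg A) (AdA : Ad *m A = 1%:M).
Hypothesis UV_pwr : proper_weak_regular A U V Ud.

Lemma pwr_UdU : Ud *m U = 1%:M.
Proof.
case: UV_pwr => [[_ _ null_UA] [UUdU _ _ _] _ _].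
apply: eq_mx_on_cV => x; rewrite mul1mx; apply/eqP; rewrite -subr_eq0; apply/eqP.
have /null_UA A_null : in_null U (Ud *m U *m x - x).
  by rewrite /in_null mulmxBr !mulmxA UUdU subrr.
by have := congr1 (mulmx Ad) A_null; rewrite mulmx0 mulmxA AdA mul1mx.
Qed.

Lemma pwr_UUdA : U *m Ud *m A = A.
Proof.
case: UV_pwr => [[_ range_UA _] [UUdU _ _ _] _ _].
apply: eq_mx_on_cV => x.
have [w Ax] : in_range U (A *m x) by apply/range_UA; exists x.
by rewrite -mulmxA Ax !mulmxA UUdU.
Qed.

Lemma pwr_UdV : Ud *m V = 1%:M - Ud *m A.
Proof.
case: UV_pwr => [[-> _ _] _ _ _].
by rewrite mulmxBr pwr_UdU opprB addrC subrK.
Qed.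

Lemma pwr_UdA_ge0 : mx_nonneg (Ud *m A).
Proof.
case: UV_pwr => _ _ Ud_ge0 _ i j.
by rewrite mxE; apply: sumr_ge0 => l _; apply: mulr_ge0.
Qed.

Lemma pwr_UdA_diag : is_diag_mx (Ud *m A).
Proof.
case: UV_pwr => _ _ _ UdV_ge0; apply/is_diag_mxP => i j ij'.
have ij : i != j := ij'; apply/eqP; rewrite eq_le pwr_UdA_ge0 andbT.
by have := UdV_ge0 i j; rewrite pwr_UdV !mxE (negbTE ij) mulr0n sub0r oppr_ge0.
Qed.

Lemma pwr_UdV_diag : is_diag_mx (Ud *m V).
Proof.
apply/is_diag_mxP => i j ij'; have ij : i != j := ij'.
rewrite pwr_UdV mxE [X in _ + X]mxE (is_diag_mxP pwr_UdA_diag) //.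
by rewrite mxE (negbTE ij) subrr.
Qed.

Lemma pwr_UdVE j : (Ud *m V) j j = 1 - (Ud *m A) j j.
Proof. by rewrite pwr_UdV !mxE eqxx. Qed.

Lemma pwr_col_scale i j : A i j = U i j * (Ud *m A) j j.
Proof. by rewrite -{1}pwr_UUdA -mulmxA mulmx_diagE // pwr_UdA_diag. Qed.

Lemma pwr_UdA_gt0 j : 0 < (Ud *m A) j j.
Proof.
have [i A_ij_gt0] := left_inverse_col_gt0 j AdA A_ge0.
rewrite lt_def pwr_UdA_ge0 andbT; apply: contraTneq A_ij_gt0 => c_j0.
by rewrite pwr_col_scale c_j0 mulr0 ltxx.
Qed.

Lemma pwr_UdV_diag_ge0_lt1 j : 0 <= (Ud *m V) j j < 1.
Proof.
case: UV_pwr => _ _ _ UdV_ge0; rewrite UdV_ge0 /= pwr_UdVE.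
by have := pwr_UdA_gt0 j; lra.
Qed.

End ProperWeakRegularSplitting.

Lemma pwr_UdV_diag_le {R : realType} {m n} {A U1 V1 U2 V2 : 'M[R]_(m, n)}
    {Ad U1d U2d : 'M[R]_(n, m)} j :
  mx_nonneg A -> Ad *m A = 1%:M ->
  proper_weak_regular A U1 V1 U1d -> proper_weak_regular A U2 V2 U2d ->
  mx_le V1 V2 -> (U1d *m V1) j j <= (U2d *m V2) j j.
Proof.
move=> A_ge0 AdA pwr1 pwr2 V_le.
rewrite (pwr_UdVE AdA pwr1) (pwr_UdVE AdA pwr2) lerD2l lerN2.
have [i A_ij_gt0] := left_inverse_col_gt0 j AdA A_ge0.
have c1_gt0 := pwr_UdA_gt0 A_ge0 AdA pwr1 j.
have c2_gt0 := pwr_UdA_gt0 A_ge0 AdA pwr2 j.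
have A1 := pwr_col_scale A_ge0 AdA pwr1 i j.
have A2 := pwr_col_scale A_ge0 AdA pwr2 i j.
have U_le : U1 i j <= U2 i j.
  case: pwr1 pwr2 => [[A_U1V1 _ _] _ _ _] [[A_U2V2 _ _] _ _ _].
  have := V_le i j; rewrite -[U1](subrK V1) -[U2](subrK V2) -A_U1V1 -A_U2V2 !mxE.
  by rewrite lerD2l.
move: A_ij_gt0 c1_gt0 c2_gt0 A1 A2 U_le.
set a := A i j; set c1 := (U1d *m A) j j; set c2 := (U2d *m A) j j.
set u1 := U1 i j; set u2 := U2 i j => a_gt0 c1_gt0 c2_gt0 A1 A2 U_le.
(* a = u1 c1 = u2 c2 with a > 0, so u2 > 0 and c2 u2 = c1 u1 <= c1 u2 *)
have u2_gt0 : 0 < u2 by move: a_gt0; rewrite A2 pmulr_lgt0.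
by rewrite -(ler_pM2l u2_gt0) -A2 A1 ler_pM2r.
Qed.

Section ProperWeakRegularMultisplitting.
Context {R : realType} {m n p : nat} {A : 'M[R]_(m, n)} {Ad : 'M[R]_(n, m)}.
Context {E : 'I_p -> 'M[R]_n}.
Hypotheses (A_ge0 : mx_nonneg A) (AdA : Ad *m A = 1%:M).

Section Iteration.
Context {U V : 'I_p -> 'M[R]_(m, n)} {Ud : 'I_p -> 'M[R]_(n, m)}.
Hypothesis UV_pwrm : proper_weak_regular_multisplitting A U V Ud E.

Lemma pwrm_iteration_diag : is_diag_mx (\sum_(k < p) E k *m (Ud k *m V k)).
Proof.
case: UV_pwrm => UV_pwr E_diag_ge0 _.
apply: (sum_mulmx_diag (T := fun k => Ud k *m V k)) => k.
  exact: pwr_UdV_diag A_ge0 AdA (UV_pwr k).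
by case: (E_diag_ge0 k).
Qed.

Lemma pwrm_iteration_diag_ge0_lt1 j :
  0 <= (\sum_(k < p) E k *m (Ud k *m V k)) j j < 1.
Proof.
case: UV_pwrm => UV_pwr E_diag_ge0 E_sum1.
have UdV_diag k := pwr_UdV_diag A_ge0 AdA (UV_pwr k).
have UdV_bounds k := pwr_UdV_diag_ge0_lt1 A_ge0 AdA (UV_pwr k) j.
have E_ge0 k : 0 <= E k j j by case: (E_diag_ge0 k) => _ E_ge0; exact: E_ge0.
rewrite sum_mulmx_diagE //; apply/andP; split.
  by apply: sumr_ge0 => k _; rewrite mulr_ge0 //; case/andP: (UdV_bounds k).
apply: convex_comb_lt => [k | | k] //; last by case/andP: (UdV_bounds k).
by rewrite -summxE E_sum1 mxE eqxx.
Qed.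

End Iteration.

Lemma pwrm_iteration_diag_le {U1 V1 U2 V2 : 'I_p -> 'M[R]_(m, n)}
    {U1d U2d : 'I_p -> 'M[R]_(n, m)} j :
  proper_weak_regular_multisplitting A U1 V1 U1d E ->
  proper_weak_regular_multisplitting A U2 V2 U2d E ->
  (forall k, mx_le (V1 k) (V2 k)) ->
  (\sum_(k < p) E k *m (U1d k *m V1 k)) j j <=
    (\sum_(k < p) E k *m (U2d k *m V2 k)) j j.
Proof.
move=> [pwr1 E_diag_ge0 _] [pwr2 _ _] V_le.
have UdV1_diag k := pwr_UdV_diag A_ge0 AdA (pwr1 k).
have UdV2_diag k := pwr_UdV_diag A_ge0 AdA (pwr2 k).
rewrite !sum_mulmx_diagE //; apply: ler_sum => k _.
rewrite ler_wpM2l ?(pwr_UdV_diag_le j A_ge0 AdA (pwr1 k) (pwr2 k) (V_le k)) //.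
by case: (E_diag_ge0 k) => _ E_ge0; exact: E_ge0.
Qed.

End ProperWeakRegularMultisplitting.

Theorem theorem5p11 (R : realType) (m n p : nat) (A : 'M[R]_(m, n))
  (Ad : 'M[R]_(n, m))
  (U1 V1 U2 V2 : 'I_p -> 'M[R]_(m, n)) (U1d U2d : 'I_p -> 'M[R]_(n, m))
  (E : 'I_p -> 'M[R]_n) :
  mx_nonneg A -> is_MP_inverse A Ad -> mx_nonneg Ad ->
  proper_weak_regular_multisplitting A U1 V1 U1d E ->
  proper_weak_regular_multisplitting A U2 V2 U2d E ->
  (forall k y, in_range (E k) y -> in_range A^T y) ->
  (forall k, mx_le (V1 k) (V2 k)) ->
  let H1 := \sum_(k < p) E k *m (U1d k *m V1 k) in
  let H2 := \sum_(k < p) E k *m (U2d k *m V2 k) in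
  spectral_radius H1 <= spectral_radius H2 /\ spectral_radius H2 < 1.
Proof.
move=> A_ge0 A_MP _ pwrm1 pwrm2 E_range V_le H1 H2.
have AdA : Ad *m A = 1%:M.
  by case: pwrm1 => _ _ E_sum1; apply: MP_left_inverse_partition E_sum1 E_range.
have H1_diag := pwrm_iteration_diag A_ge0 AdA pwrm1.
have H2_diag := pwrm_iteration_diag A_ge0 AdA pwrm2.
have H1_bounds := pwrm_iteration_diag_ge0_lt1 A_ge0 AdA pwrm1.
have H2_bounds := pwrm_iteration_diag_ge0_lt1 A_ge0 AdA pwrm2.
split.
- apply: spectral_radius_diag_le => // j.
  have /andP[H1_ge0 _] := H1_bounds j; have /andP[H2_ge0 _] := H2_bounds j.
  by rewrite !ger0_norm // (pwrm_iteration_diag_le A_ge0 AdA j pwrm1 pwrm2 V_le).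
- apply: spectral_radius_diag_lt => // j.
  by have /andP[H2_ge0 H2_lt1] := H2_bounds j; rewrite ger0_norm.
Qed.
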